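(* Let $r_1,r_2>0$ and $g,h\in\Gamma_0(\mathbb{R}^n)$. Then $e_{r_1}g+e_{r_2}h=e_{r_1+r_2}f$ for some $f\in\Gamma_0(\mathbb{R}^n)$; specifically, $$f(x)=\sup_{v\in\mathbb{R}^n}\Big\{\big[e_{r_1}g(x+v)-r_1q(v)\big]+\big[e_{r_2}h(x+v)-r_2q(v)\big]\Big\}.$$
   Context: $\Gamma_0(\mathbb{R}^n)$ is the set of proper convex lsc functions on $\mathbb{R}^n$; $e_rg(x)=\inf_y\{g(y)+\frac r2\|y-x\|^2\}$; $q=\frac12\|\cdot\|^2$. *)

From HB Require Import structures.
From mathcomp Require Import all_boot all_order all_algebra.
From mathcomp Require Import all_classical all_reals all_analysis.
Import numFieldNormedType.Exports.
Set Implicit Arguments. Unset Strict Implicit. Unset Printing Implicit Defensive.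
Import Order.TTheory GRing.Theory Num.Theory.
Local Open Scope ring_scope.
Local Open Scope classical_set_scope.

Section Defs.
Context {R : realType} {n : nat}.
Implicit Types (f : 'rV[R]_n -> \bar R) (x y : 'rV[R]_n).

Definition q (v : 'rV[R]_n) : R := (\sum_(i < n) v ord0 i ^+ 2) / 2.

Definition proper_fun f : Prop :=
  (forall x, f x != -oo%E) /\ (exists x, f x != +oo%E).

(* convexity of an extended-real-valued function (epigraph is convex) *)
Definition convex_efun f : Prop :=
  forall x y (a b t : R), (f x <= a%:E)%E -> (f y <= b%:E)%E ->
    0 <= t <= 1 ->
    (f (t *: x + (1 - t) *: y)%R <= (t * a + (1 - t) * b)%R%:E)%E.

Definition Gamma0 f : Prop :=
  [/\ proper_fun f, convex_efun f & lower_semicontinuous f].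

Definition menv (r : R) f (x : 'rV[R]_n) : \bar R :=
  ereal_inf [set (f y + (r * q (y - x)%R)%R%:E)%E | y in [set: 'rV[R]_n]].

End Defs.

From HB Require Import structures.
From mathcomp Require Import all_boot all_order all_algebra.
From mathcomp Require Import all_classical all_reals all_analysis.
From mathcomp Require Import ring lra.
Import numFieldNormedType.Exports.
Import Order.TTheory GRing.Theory Num.Theory.
Local Open Scope ring_scope.
Local Open Scope classical_set_scope.

(* Put phi := e_r1 g + e_r2 h, which is real-valued and convex, and
   f x := sup_v [phi (x + v) - (r1 + r2) q v], a supremum of convex functions of x
   which is also, after the change of variables w = x + v, a supremum of continuous
   functions of x; hence f is convex and lsc.  The inequality phi <= e_(r1+r2) f is
   immediate.  Conversely, if y1 and y2 nearly realize e_r1 g (x) and e_r2 h (x),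
   the König-Huygens identity centred at their weighted barycenter y bounds
   f y + (r1 + r2) q (y - x) by g y1 + r1 q (y1 - x) + h y2 + r2 q (y2 - x). *)

Section quadratic.
Context {R : realType} {n : nat}.
Implicit Types (v w : 'rV[R]_n).

Lemma mulr_qE (k : R) v : k * q v = \sum_(i < n) k * v ord0 i ^+ 2 / 2.
Proof. by rewrite /q mulrA mulr_sumr mulr_suml. Qed.

Lemma qN v : q (- v) = q v.
Proof. by rewrite /q; congr (_ / _); apply: eq_bigr => i _; rewrite mxE sqrrN. Qed.

Lemma qB v w : q (v - w) = q (w - v).
Proof. by rewrite -opprB qN. Qed.

Lemma q_convex v w (t : R) : 0 <= t <= 1 ->
  q (t *: v + (1 - t) *: w) <= t * q v + (1 - t) * q w.
Proof.
move=> /andP[t0 t1]; rewrite -[q _]mul1r !mulr_qE -big_split /=.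
apply: ler_sum => i _; rewrite !mxE.
have : 0 <= t * (1 - t) * (v ord0 i - w ord0 i) ^+ 2.
  by rewrite mulr_ge0 ?sqr_ge0 // mulr_ge0 // subr_ge0.
nra.
Qed.

Definition barycenter (r1 r2 : R) (y1 y2 : 'rV[R]_n) : 'rV[R]_n :=
  (r1 + r2)^-1 *: (r1 *: y1 + r2 *: y2).

(* König-Huygens: a weighted moment about z splits at the barycenter. *)
Lemma q_barycenter {r1 r2 : R} (y1 y2 z : 'rV[R]_n)
    (y := barycenter r1 r2 y1 y2) : r1 + r2 != 0 ->
  r1 * q (y1 - z) + r2 * q (y2 - z) =
  r1 * q (y1 - y) + r2 * q (y2 - y) + (r1 + r2) * q (z - y).
Proof.
move=> r12; rewrite !mulr_qE -!big_split /=; apply: eq_bigr => i _.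
by rewrite /y /barycenter !mxE; field.
Qed.

(* `|v| is the sup norm of 'rV, not the Euclidean one. *)
Lemma sqr_norm_le_q v : `|v| ^+ 2 / 2 <= q v.
Proof.
rewrite ler_pM2r ?invr_gt0 // [`|v|]/Num.Def.normr /= mx_normrE.
apply: (big_ind (fun m => m ^+ 2 <= _)) => [|a b|[i j] _].
- by rewrite expr0n sumr_ge0 // => *; rewrite sqr_ge0.
- by move=> ha hb; rewrite maxEle; case: ifP.
- rewrite (ord1 i) real_normK ?num_real // (bigD1 j) //= lerDl.
  by rewrite sumr_ge0 // => *; rewrite sqr_ge0.
Qed.

Lemma mulr_norm_sub_q_le (K : R) {r : R} v : 0 < r ->
  K * `|v| - r * q v <= K ^+ 2 / (2 * r).
Proof.
move=> r0; have := sqr_norm_le_q v; rewrite -(ler_pM2l r0) => hq.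
have : 0 <= (r * `|v| - K) ^+ 2 / (2 * r) by rewrite divr_ge0 ?sqr_ge0 // mulr_ge0 // ltW.
have -> : (r * `|v| - K) ^+ 2 / (2 * r) = r * (`|v| ^+ 2 / 2) - K * `|v| + K ^+ 2 / (2 * r).
  by field; rewrite gt_eqF.
lra.
Qed.

Lemma q_continuous : continuous (@q R n).
Proof.
have sum_sqr : continuous (fun v : 'rV[R]_n => \sum_(i < n) v ord0 i ^+ 2).
  apply: (@continuous_big R^o _ +%R 0 xpredT (@add_continuous R^o)) => i _ v.
  apply: (@continuous_comp _ _ _ (fun w : 'rV[R]_n => w ord0 i)
    (fun x : R => x ^+ 2)).
    exact: coord_continuous.
  exact: exprn_continuous.
by move=> v; apply: cvgMr_tmp (sum_sqr v).
Qed.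

End quadratic.

Section semicontinuity.
Context {X : topologicalType} {R : realType}.

Lemma lower_semicontinuous_ereal_sup (I : Type) (F : I -> X -> \bar R) :
  (forall i, lower_semicontinuous (F i)) ->
  lower_semicontinuous (fun x => ereal_sup [set F i x | i in [set: I]]).
Proof.
move=> Flsc x a /ereal_sup_gt [_ [i _ <-] aFix].
have [V xV aFV] := Flsc i x a aFix.
exists V => // y /aFV /lt_le_trans; apply; apply: ereal_sup_ubound; by exists i.
Qed.

Lemma continuous_lower_semicontinuous (f : X -> R) :
  continuous f -> lower_semicontinuous (fun x => (f x)%:E).
Proof.
move=> fc x a; rewrite lte_fin => afx.
by exists [set y | a < f y]; [exact: cvgr_gt (fc x) _ afx|].
Qed.

End semicontinuity.

Section moreau_envelope.
Context {R : realType} {n : nat}.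
Implicit Types (g : 'rV[R]_n -> \bar R) (x y : 'rV[R]_n).

Lemma proper_fun_fin {g} : proper_fun g -> exists x (a : R), g x = a%:E.
Proof.
case=> gNy [x gxy]; exists x, (fine (g x)).
by rewrite fineK // fin_numE gxy gNy.
Qed.

(* g > g x0 - 1 on a ball around x0, and convexity along the segment from x0
   to y turns this into a lower bound at y which degrades linearly with the distance. *)
Lemma Gamma0_norm_minorant {g} : Gamma0 g ->
  exists x0 (c K : R), 0 <= K /\ forall y, ((c - K * `|y - x0|)%:E <= g y)%E.
Proof.
case=> gP gc glsc; have [x0 [gx gx0]] := proper_fun_fin gP.
have : ((gx - 1)%:E < g x0)%E by rewrite gx0 lte_fin ltrBlDr ltrDl.
move=> /(glsc x0) [V /nbhs_ballP [del /= del0 ballV] gV].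
exists x0, (gx - 1), del^-1; split => [|y]; first by rewrite invr_ge0 ltW.
set w := y - x0; have w0 : 0 <= `|w| by [].
set t := del / (del + `|w|).
have t0 : 0 < t by rewrite divr_gt0 // ltr_wpDr.
have t1 : t <= 1 by rewrite ler_pdivrMr ?ltr_wpDr // mul1r lerDl.
have tw : t * (1 + del^-1 * `|w|) = 1 by rewrite /t; field; rewrite !gt_eqF ?ltr_wpDr.
have zV : V (t *: y + (1 - t) *: x0).
  apply: ballV; rewrite -ball_normE /ball_ /=.
  have -> : x0 - (t *: y + (1 - t) *: x0) = - (t *: w).
    by apply/matrixP => i j; rewrite !mxE; ring.
  rewrite normrN normrZ gtr0_norm // /t mulrAC ltr_pdivrMr ?ltr_wpDr //.
  by rewrite ltr_pM2l // ltrDr.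
case gy : (g y) => [b| |]; [|by rewrite leey|by case: gP => /(_ y); rewrite gy].
have := gc y x0 b gx t; rewrite gy gx0 !lexx t1 (ltW t0) => /(_ isT isT isT).
move=> /(lt_le_trans (gV _ zV)); rewrite lte_fin lee_fin -(ler_pM2l t0) => hlt.
have -> : t * (gx - 1 - del^-1 * `|w|) = t * gx - t * (1 + del^-1 * `|w|) by ring.
rewrite tw; lra.
Qed.

Lemma menv_le (r : R) g x y : (menv r g x <= g y + (r * q (y - x))%:E)%E.
Proof. by apply: ereal_inf_lbound; exists y. Qed.

Lemma menv_lt (r b : R) g x : (menv r g x < b%:E)%E ->
  exists y, (g y < (b - r * q (y - x))%:E)%E.
Proof. by move=> /ereal_inf_lt [_ [y _ <-] gyb]; exists y; rewrite EFinB lteBrDr. Qed.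

Lemma menv_fin_num (r : R) g x : 0 < r -> Gamma0 g -> menv r g x \is a fin_num.
Proof.
move=> r0 gG; rewrite fin_numElt; apply/andP; split.
  have [x0 [c [K [K0 gK]]]] := Gamma0_norm_minorant gG.
  apply: (@lt_le_trans _ _ (c - K * `|x - x0| - K ^+ 2 / (2 * r))%:E).
    exact: ltNyr.
  apply: le_ereal_inf_tmp => _ [y _ <-].
  apply: le_trans (leeD (gK y) (lexx _)); rewrite -EFinD lee_fin.
  have : `|y - x0| <= `|y - x| + `|x - x0|.
    by rewrite (le_trans _ (ler_normD _ _)) // addrA subrK.
  move=> /(ler_wpM2l K0); have := mulr_norm_sub_q_le K (y - x) r0; lra.
case: gG => /proper_fun_fin [x1 [a gx1]] _ _.
by apply: le_lt_trans (menv_le r g x x1) _; rewrite gx1 -EFinD ltry.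
Qed.

Lemma fine_menv_le {r a : R} {g y} x : 0 < r -> Gamma0 g -> (g y <= a%:E)%E ->
  fine (menv r g x) <= a + r * q (y - x).
Proof.
move=> r0 gG gya; rewrite -lee_fin fineK ?menv_fin_num // EFinD.
exact: le_trans (menv_le r g x y) (leeD gya (lexx _)).
Qed.

Lemma menv_convex (r : R) g : 0 <= r -> convex_efun g -> convex_efun (menv r g).
Proof.
move=> r0 gc x y a b t gxa gyb t01; have /andP[t0 t1] := t01.
apply/lee_addgt0Pr => e e0.
have [y1 gy1] : exists y1, (g y1 < (a + e - r * q (y1 - x))%:E)%E.
  by apply: menv_lt; apply: le_lt_trans gxa _; rewrite lte_fin ltrDl.
have [y2 gy2] : exists y2, (g y2 < (b + e - r * q (y2 - y))%:E)%E.
  by apply: menv_lt; apply: le_lt_trans gyb _; rewrite lte_fin ltrDl.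
set z := t *: y1 + (1 - t) *: y2.
apply: le_trans (menv_le r g _ z) _.
apply: le_trans (leeD (gc _ _ _ _ t (ltW gy1) (ltW gy2) t01) (lexx _)) _.
rewrite -!EFinD lee_fin.
have : q (z - (t *: x + (1 - t) *: y)) <= t * q (y1 - x) + (1 - t) * q (y2 - y).
  have -> : z - (t *: x + (1 - t) *: y) = t *: (y1 - x) + (1 - t) *: (y2 - y).
    by apply/matrixP => i j; rewrite !mxE; ring.
  exact: q_convex.
move=> /(ler_wpM2l r0); lra.
Qed.

Lemma fine_menv_convex {r : R} {g} x y {t : R} : 0 < r -> Gamma0 g -> 0 <= t <= 1 ->
  fine (menv r g (t *: x + (1 - t) *: y)) <=
    t * fine (menv r g x) + (1 - t) * fine (menv r g y).
Proof.
move=> r0 gG t01; have [_ gc _] := gG.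
rewrite -lee_fin fineK ?menv_fin_num //.
by apply: menv_convex (ltW r0) gc _ _ _ _ _ _ _ t01; rewrite fineK ?menv_fin_num.
Qed.

End moreau_envelope.

Section deconvolution.
Context {R : realType} {n : nat}.
Variables (c : R) (phi : 'rV[R]_n -> R).

(* Hiriart-Urruty's deconvolution of phi by c q; it inverts the Moreau envelope e_c
   on its range. *)
Definition deconv (x : 'rV[R]_n) : \bar R :=
  ereal_sup [set (phi (x + v) - c * q v)%:E | v in [set: 'rV[R]_n]].

Lemma deconv_ge x v : ((phi (x + v) - c * q v)%:E <= deconv x)%E.
Proof. by apply: ereal_sup_ubound; exists v. Qed.

Lemma deconv_neqNy x : deconv x != -oo%E.
Proof. by rewrite gt_eqF // (lt_le_trans _ (deconv_ge x 0)) ?ltNyr. Qed.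

Lemma deconvE x :
  deconv x = ereal_sup [set (phi w - c * q (w - x))%:E | w in [set: 'rV[R]_n]].
Proof.
congr ereal_sup; apply/seteqP; split => _ [v _ <-].
  by exists (x + v) => //; rewrite addrAC subrr add0r.
by exists (v - x) => //; rewrite addrCA subrr addr0.
Qed.

Lemma deconv_lsc : lower_semicontinuous deconv.
Proof.
rewrite (funext deconvE).
have := @lower_semicontinuous_ereal_sup 'rV[R]_n R _
  (fun w x => (phi w - c * q (w - x))%:E).
apply=> w; apply: continuous_lower_semicontinuous => x.
apply: (@continuousB R R^o 'rV[R]_n); first exact: cst_continuous.
apply: continuousM; first exact: cst_continuous.
apply: continuous_comp; last exact: q_continuous.
by apply: continuousB; [exact: cst_continuous | exact: cvg_id].
Qed.

Lemma deconv_convex : convex_efun (fun x => (phi x)%:E) -> convex_efun deconv.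
Proof.
move=> phic x y a b t xa yb t01; apply: ge_ereal_sup => _ [v _ <-].
have phi_le z d : (deconv z <= d%:E)%E -> ((phi (z + v))%:E <= (d + c * q v)%:E)%E.
  by move=> zd; rewrite lee_fin -lerBlDr -lee_fin (le_trans (deconv_ge z v) zd).
have := phic _ _ _ _ t (phi_le _ _ xa) (phi_le _ _ yb) t01.
have -> : t *: (x + v) + (1 - t) *: (y + v) = t *: x + (1 - t) *: y + v.
  by apply/matrixP => i j; rewrite !mxE; ring.
rewrite !lee_fin; lra.
Qed.

Lemma menv_deconv_ge x : ((phi x)%:E <= menv c deconv x)%E.
Proof.
apply: le_ereal_inf_tmp => _ [y _ <-].
apply: le_trans (leeD (deconv_ge y (x - y)) (lexx _)).
by rewrite -EFinD lee_fin addrCA subrr addr0 qB subrK.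
Qed.

End deconvolution.

Section menv_sum.
Context {R : realType} {n : nat}.
Variables (r1 r2 : R) (g h : 'rV[R]_n -> \bar R).
Hypotheses (r1_gt0 : 0 < r1) (r2_gt0 : 0 < r2) (gG : Gamma0 g) (hG : Gamma0 h).

Let phi x := fine (menv r1 g x) + fine (menv r2 h x).
Let r12_neq0 : r1 + r2 != 0. Proof. by rewrite gt_eqF ?addr_gt0. Qed.

Lemma menv_sumE x : (phi x)%:E = (menv r1 g x + menv r2 h x)%E.
Proof. by rewrite EFinD !fineK ?menv_fin_num. Qed.

Lemma menv_sum_convex : convex_efun (fun x => (phi x)%:E).
Proof.
move=> x y a b t; rewrite !lee_fin => xa yb t01.
have /andP[t0 t1] := t01; have t1' : 0 <= 1 - t by rewrite subr_ge0.
have := fine_menv_convex x y r1_gt0 gG t01.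
have := fine_menv_convex x y r2_gt0 hG t01.
have := ler_wpM2l t0 xa.
have := ler_wpM2l t1' yb.
rewrite /phi; lra.
Qed.

Lemma deconv_menv_sum_le {y1 y2 : 'rV[R]_n} {a b : R}
    (y := barycenter r1 r2 y1 y2) : (g y1 <= a%:E)%E -> (h y2 <= b%:E)%E ->
  (deconv (r1 + r2) phi y <= (a + b + (r1 * q (y1 - y) + r2 * q (y2 - y)))%:E)%E.
Proof.
move=> gy1 hy2; apply: ge_ereal_sup => _ [v _ <-]; rewrite lee_fin.
have := fine_menv_le (y + v) r1_gt0 gG gy1.
have := fine_menv_le (y + v) r2_gt0 hG hy2.
have := q_barycenter y1 y2 (y + v) r12_neq0; rewrite -/y [y + v - y]addrC addKr.
rewrite /phi; lra.
Qed.

Lemma deconv_menv_sum_proper : proper_fun (deconv (r1 + r2) phi).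
Proof.
split; first exact: deconv_neqNy.
have [[/proper_fun_fin [y1 [a gy1]] _ _] [/proper_fun_fin [y2 [b hy2]] _ _]] := (gG, hG).
have [gy1a hy2b] : (g y1 <= a%:E)%E /\ (h y2 <= b%:E)%E by rewrite gy1 hy2.
exists (barycenter r1 r2 y1 y2).
by rewrite lt_eqF // (le_lt_trans (deconv_menv_sum_le gy1a hy2b)) ?ltry.
Qed.

Lemma menv_deconv_menv_sum x : menv (r1 + r2) (deconv (r1 + r2) phi) x = (phi x)%:E.
Proof.
apply/eqP; rewrite eq_le menv_deconv_ge andbT; apply/lee_addgt0Pr => e e0.
have e20 : 0 < e / 2 by rewrite divr_gt0.
have [y1 gy1] : exists y1, (g y1 < (fine (menv r1 g x) + e / 2 - r1 * q (y1 - x))%:E)%E.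
  by apply: menv_lt; rewrite -[X in (X < _)%E]fineK ?menv_fin_num // lte_fin ltrDl.
have [y2 hy2] : exists y2, (h y2 < (fine (menv r2 h x) + e / 2 - r2 * q (y2 - x))%:E)%E.
  by apply: menv_lt; rewrite -[X in (X < _)%E]fineK ?menv_fin_num // lte_fin ltrDl.
set y := barycenter r1 r2 y1 y2.
apply: le_trans (menv_le _ _ x y) _.
apply: le_trans (leeD (deconv_menv_sum_le (ltW gy1) (ltW hy2)) (lexx _)) _.
rewrite -!EFinD lee_fin (qB y x).
have := q_barycenter y1 y2 x r12_neq0; rewrite /= -/y /phi; lra.
Qed.

Lemma deconv_menv_sumE x : deconv (r1 + r2) phi x =
  ereal_sup [set ((menv r1 g (x + v) - (r1 * q v)%:E) +
                  (menv r2 h (x + v) - (r2 * q v)%:E))%E | v in [set: 'rV[R]_n]].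
Proof.
congr ereal_sup; apply: eq_imagel => v _.
rewrite -[menv r1 g _]fineK ?menv_fin_num // -[menv r2 h _]fineK ?menv_fin_num //.
by rewrite -!EFinB -EFinD /phi; congr _%:E; ring.
Qed.

End menv_sum.

Theorem corollary4p41 (R : realType) (n : nat) (r1 r2 : R)
    (g h : 'rV[R]_n -> \bar R) :
  0 < r1 -> 0 < r2 -> Gamma0 g -> Gamma0 h ->
  exists f : 'rV[R]_n -> \bar R,
    [/\ Gamma0 f,
        (forall x, (menv r1 g x + menv r2 h x)%E = menv (r1 + r2) f x) &
        (forall x, f x = ereal_sup
           [set ((menv r1 g (x + v) - (r1 * q v)%:E) +
                 (menv r2 h (x + v) - (r2 * q v)%:E))%E
           | v in [set: 'rV[R]_n]])].
Proof.
move=> r1_gt0 r2_gt0 gG hG.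
pose phi x := fine (menv r1 g x) + fine (menv r2 h x).
exists (deconv (r1 + r2) phi); split.
- split; first exact: deconv_menv_sum_proper.
    exact/deconv_convex/menv_sum_convex.
  exact: deconv_lsc.
- by move=> x; rewrite menv_deconv_menv_sum // menv_sumE.
- by move=> x; rewrite deconv_menv_sumE.
Qed.
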